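(* Let $\xi$ and $\chi$ be $\mu$-calculus formulas such that $\xi$ is free for $x$ in $\chi$, $x\in\mathrm{FV}(\chi)$, $|\xi|>1$, and $\chi[\xi/x]$ is tidy. Then there are a tidy formula $\chi'$ and a variable $x'$ such that $\xi$ is free for $x'$ in $\chi'$, $\chi'[\xi/x']=\chi[\xi/x]$, $|\chi'|\le|\chi|$, $\mathit{ad}_\eta(\chi')\le\mathit{ad}_\eta(\chi)$ for both $\eta\in\{\mu,\nu\}$, and $\xi\not\trianglelefteq_f\chi'$.
   Context: Syntax. Formulas of the modal $\mu$-calculus are taken in negation normal form: $\phi ::= \top \mid \bot \mid p \mid \neg p \mid x \mid \phi\land\phi\mid\phi\lor\phi\mid\Diamond\phi\mid\Box\phi\mid\mu x.\phi\mid\nu x.\phi$, where $p$ ranges over proposition letters and $x$ over an infinite supply of variables (which occur only positively). The formulas $\top,\bot,p,\neg p,x$ are atomic. $\mathrm{FV}(\phi)$ and $\mathrm{BV}(\phi)$ are the sets of free and bound variables of $\phi$; $\phi$ is tidy if $\mathrm{FV}(\phi)\cap\mathrm{BV}(\phi)=\varnothing$. $\bar\eta$ denotes the fixpoint operator other than $\eta\in\{\mu,\nu\}$. $\chi[\xi/x]$ is the result of replacing every free occurrence of $x$ in $\chi$ by $\xi$; $\xi$ is free for $x$ in $\chi$ if no free variable of $\xi$ becomes bound in $\chi[\xi/x]$. $|\phi|$ is the length of $\phi$ (number of nodes of its syntax tree). Free subformulas. $\phi\trianglelefteq_f\psi$ iff $\psi=\chi[\phi/y]$ for some formula $\chi$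 and variable $y$ with $y\in\mathrm{FV}(\chi)$ and $\phi$ free for $y$ in $\chi$. Alternation hierarchy. The classes $\mathrm{AH}_\eta(n)$ ($\eta\in\{\mu,\nu\}$, $n\in\omega$) are the least classes such that: (1) all atomic formulas belong to $\mathrm{AH}_\eta(0)$; (2) each $\mathrm{AH}_\eta(n)$ is closed under $\land,\lor,\Diamond,\Box$; (3) if $\chi\in\mathrm{AH}_\eta(n)$ then $\bar\eta x.\chi\in\mathrm{AH}_\eta(n)$; (4) if $\chi,\xi\in\mathrm{AH}_\eta(n)$ and $\xi$ is free for $x$ in $\chi$ then $\chi[\xi/x]\in\mathrm{AH}_\eta(n)$; (5) $\mathrm{AH}_\mu(n)\cup\mathrm{AH}_\nu(n)\subseteq\mathrm{AH}_\eta(n+1)$. $\mathit{ad}_\eta(\xi)$ is the least $k$ with $\xi\in\mathrm{AH}_\eta(k)$. *)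

From Stdlib Require Import Arith Lia Classical ClassicalEpsilon.

(* Proposition letters and variables are both drawn from nat
   (an infinite supply); they live in separate syntactic categories. *)
Inductive form : Type :=
| FTop : form
| FBot : form
| FProp : nat -> form
| FNProp : nat -> form
| FVar : nat -> form
| FAnd : form -> form -> form
| FOr : form -> form -> form
| FDia : form -> form
| FBox : form -> form
| FMu : nat -> form -> form
| FNu : nat -> form -> form.

Inductive fp : Type := Mu | Nu.
Definition fp_dual (e : fp) : fp := match e with Mu => Nu | Nu => Mu end.
Definition FFix (e : fp) (x : nat) (f : form) : form :=
  match e with Mu => FMu x f | Nu => FNu x f end.

Definition atomic (f : form) : Prop :=
  match f with FTop | FBot | FProp _ | FNProp _ | FVar _ => True | _ => False end.

Fixpoint free_in (x : nat) (f : form) : Prop :=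
  match f with
  | FVar y => x = y
  | FTop | FBot | FProp _ | FNProp _ => False
  | FAnd a b | FOr a b => free_in x a \/ free_in x b
  | FDia a | FBox a => free_in x a
  | FMu y a | FNu y a => x <> y /\ free_in x a
  end.

Fixpoint bound_in (x : nat) (f : form) : Prop :=
  match f with
  | FTop | FBot | FProp _ | FNProp _ | FVar _ => False
  | FAnd a b | FOr a b => bound_in x a \/ bound_in x b
  | FDia a | FBox a => bound_in x a
  | FMu y a | FNu y a => x = y \/ bound_in x a
  end.

Definition tidy (f : form) : Prop := forall x, ~ (free_in x f /\ bound_in x f).

(* subst chi xi x = chi[xi/x]: replace every free occurrence of x in chi by xi *)
Fixpoint subst (chi xi : form) (x : nat) : form :=
  match chi with
  | FVar y => if Nat.eqb x y then xi else FVar y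
  | FTop | FBot | FProp _ | FNProp _ => chi
  | FAnd a b => FAnd (subst a xi x) (subst b xi x)
  | FOr a b => FOr (subst a xi x) (subst b xi x)
  | FDia a => FDia (subst a xi x)
  | FBox a => FBox (subst a xi x)
  | FMu y a => if Nat.eqb x y then chi else FMu y (subst a xi x)
  | FNu y a => if Nat.eqb x y then chi else FNu y (subst a xi x)
  end.

(* free_for xi x chi : xi is free for x in chi, i.e. no free variable of xi
   becomes bound in chi[xi/x] (no free occurrence of x in chi lies in the
   scope of a binder of a free variable of xi). *)
Fixpoint free_for (xi : form) (x : nat) (chi : form) : Prop :=
  match chi with
  | FTop | FBot | FProp _ | FNProp _ | FVar _ => True
  | FAnd a b | FOr a b => free_for xi x a /\ free_for xi x b
  | FDia a | FBox a => free_for xi x a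
  | FMu y a | FNu y a =>
      x = y \/ ((free_in x a -> ~ free_in y xi) /\ free_for xi x a)
  end.

Fixpoint size (f : form) : nat :=
  match f with
  | FTop | FBot | FProp _ | FNProp _ | FVar _ => 1
  | FAnd a b | FOr a b => S (size a + size b)
  | FDia a | FBox a | FMu _ a | FNu _ a => S (size a)
  end.

Definition free_subformula (phi psi : form) : Prop :=
  exists (chi : form) (y : nat),
    psi = subst chi phi y /\ free_in y chi /\ free_for phi y chi.

Inductive AH : fp -> nat -> form -> Prop :=
| AH_atom : forall e f, atomic f -> AH e 0 f
| AH_and : forall e n a b, AH e n a -> AH e n b -> AH e n (FAnd a b)
| AH_or : forall e n a b, AH e n a -> AH e n b -> AH e n (FOr a b)
| AH_dia : forall e n a, AH e n a -> AH e n (FDia a)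
| AH_box : forall e n a, AH e n a -> AH e n (FBox a)
| AH_fix : forall e n x chi, AH e n chi -> AH e n (FFix (fp_dual e) x chi)
| AH_subst : forall e n x chi xi,
    AH e n chi -> AH e n xi -> free_for xi x chi -> AH e n (subst chi xi x)
| AH_up : forall e e' n f, AH e' n f -> AH e (S n) f.

Definition is_ad (e : fp) (f : form) (k : nat) : Prop :=
  AH e k f /\ (forall j, AH e j f -> k <= j).

(* ad_e(f): the least k with f in AH_e(k) (chosen by Hilbert epsilon;
   ad_spec below shows it is indeed the least level). *)
Definition ad (e : fp) (f : form) : nat := epsilon (inhabits 0) (is_ad e f).

Lemma AH_mono : forall e n m f, n <= m -> AH e n f -> AH e m f.
Proof.
  intros e n m f H; induction H; auto.
  intro; apply (AH_up e e); auto.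
Qed.

Lemma AH_exists : forall f e, exists k, AH e k f.
Proof.
  induction f; intros e;
  try (exists 0; apply AH_atom; exact I).
  - destruct (IHf1 e) as [k1 H1]; destruct (IHf2 e) as [k2 H2].
    exists (max k1 k2); apply AH_and; [apply (AH_mono e k1) | apply (AH_mono e k2)]; auto; lia.
  - destruct (IHf1 e) as [k1 H1]; destruct (IHf2 e) as [k2 H2].
    exists (max k1 k2); apply AH_or; [apply (AH_mono e k1) | apply (AH_mono e k2)]; auto; lia.
  - destruct (IHf e) as [k H]; exists k; now apply AH_dia.
  - destruct (IHf e) as [k H]; exists k; now apply AH_box.
  - destruct (IHf Nu) as [k H].
    assert (AH Nu k (FMu n f)) by exact (AH_fix Nu k n f H).
    destruct e; [exists (S k); eapply AH_up; eauto | exists k; auto].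
  - destruct (IHf Mu) as [k H].
    assert (AH Mu k (FNu n f)) by exact (AH_fix Mu k n f H).
    destruct e; [exists k; auto | exists (S k); eapply AH_up; eauto].
Qed.

Lemma is_ad_exists : forall e f, exists k, is_ad e f k.
Proof.
  intros e f.
  destruct (AH_exists f e) as [k Hk].
  assert (Hgen : forall n, n <= k -> AH e n f \/ True -> 
                 (exists j, j <= k /\ AH e j f) -> exists m, is_ad e f m).
  { intros _ _ _ Hex.
    clear Hk.
    destruct Hex as [j [_ Hj]].
    revert Hj.
    induction j as [j IH] using (well_founded_induction lt_wf).
    intro Hj.
    destruct (classic (exists i, i < j /\ AH e i f)) as [[i [Hi1 Hi2]] | Hno].
    - exact (IH i Hi1 Hi2).
    - exists j; split; auto.
      intros i Hi. destruct (le_lt_dec j i); auto.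
      exfalso; apply Hno; exists i; split; auto. }
  apply (Hgen k (le_n k) (or_intror I)); eauto.
Qed.

Lemma ad_spec : forall e f, is_ad e f (ad e f).
Proof.
  intros e f; unfold ad; apply epsilon_spec, is_ad_exists.
Qed.

From Stdlib Require Import Arith Lia List Classical ClassicalEpsilon.
Import ListNotations.

(* Proof of Theorem 10.  Pick a variable x' fresh for chi and xi, rename x to x'
   in chi, and then replace, top-down, every occurrence of xi whose free
   variables are not bound above it by x' (replace_free).  The result chi' has
   all the required syntactic properties by straightforward inductions, and xi
   is no longer a free subformula of it.

   The real work is the bound on the alternation depth.  chi' is an
   "abstraction" of chi[x'/x]: it arises by cutting subformulas down to
   variables without capture.  We show that every class AH_e(n) is closed under
   abstraction (AH_abstraction), by induction on membership.  The only hard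
   case is the substitution rule: an abstraction of chi[xi/x] may abstract the
   different copies of xi differently.  We therefore split off one occurrence of
   x at a time (rename_first), and decompose an abstraction of g[xi/z], z
   occurring once in g, as c0[e/z] with c0 an abstraction of g and e one of xi
   (peel_occurrence); closure under substitution then finishes the case. *)

Ltac case_eqb := repeat match goal with
  | |- context [Nat.eqb ?a ?b] => destruct (Nat.eqb_spec a b)
  | H : context [Nat.eqb ?a ?b] |- _ => destruct (Nat.eqb_spec a b)
  end.

(* The largest variable occurring in f, free or bound; anything above it is fresh. *)
Fixpoint maxvar (f : form) : nat :=
  match f with
  | FVar y => y
  | FTop | FBot | FProp _ | FNProp _ => 0
  | FAnd a b | FOr a b => max (maxvar a) (maxvar b)
  | FDia a | FBox a => maxvar a
  | FMu y a | FNu y a => max y (maxvar a)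
  end.

Lemma free_maxvar (f : form) (w : nat) : free_in w f -> w <= maxvar f.
Proof.
  revert w; induction f; simpl; intros w H; try tauto; try (subst; lia);
    try (destruct H as [H|H]; [apply IHf1 in H | apply IHf2 in H]; lia);
    try (apply IHf in H; lia); try (destruct H as [_ H]; apply IHf in H; lia).
Qed.

Lemma bound_maxvar (f : form) (w : nat) : bound_in w f -> w <= maxvar f.
Proof.
  revert w; induction f; simpl; intros w H; try tauto;
    try (destruct H as [H|H]; [apply IHf1 in H | apply IHf2 in H]; lia);
    try (apply IHf in H; lia);
    try (destruct H as [H|H]; [subst; lia | apply IHf in H; lia]).
Qed.

Lemma subst_notfree (c z : form) (u : nat) : ~ free_in u c -> subst c z u = c.
Proof.
  revert z u; induction c; simpl; intros z u H; case_eqb; subst; try tauto;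
    try (rewrite IHc1, IHc2 by tauto; reflexivity);
    try (rewrite IHc by tauto; reflexivity).
Qed.

Lemma free_subst_keep (c z : form) (u w : nat) :
  free_in w c -> w <> u -> free_in w (subst c z u).
Proof.
  revert z u w; induction c; simpl; intros z u w H Hn; case_eqb; simpl; subst; try tauto;
    try (destruct H; [left; apply IHc1 | right; apply IHc2]; auto);
    try (apply IHc; auto); try (split; [tauto | apply IHc; tauto]).
Qed.

Lemma bound_subst_keep (c z : form) (u w : nat) :
  bound_in w c -> bound_in w (subst c z u).
Proof.
  revert z u w; induction c; simpl; intros z u w H; case_eqb; simpl; subst; try tauto;
    try (destruct H; [left; apply IHc1 | right; apply IHc2]; auto);
    try (apply IHc; auto); try (destruct H; [left; auto | right; apply IHc; auto]).
Qed.

Lemma free_subst_inv (c z : form) (u w : nat) :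
  free_in w (subst c z u) -> (free_in w c /\ w <> u) \/ free_in w z.
Proof.
  revert z u w; induction c; simpl; intros z u w H; case_eqb; simpl in *; subst; try tauto.
  all: try (destruct H as [H|H]; [apply IHc1 in H | apply IHc2 in H]; tauto).
  all: try (apply IHc in H; tauto).
  all: try (destruct H as [Hwn H]; apply IHc in H; tauto).
  all: left; split; auto.
Qed.

Lemma notfree_subst (c z : form) (u w : nat) :
  ~ free_in w c -> ~ free_in w z -> ~ free_in w (subst c z u).
Proof. intros Hc Hz H; apply free_subst_inv in H; tauto. Qed.

Lemma bound_subst_inv (c z : form) (u w : nat) :
  bound_in w (subst c z u) -> bound_in w c \/ bound_in w z.
Proof.
  revert z u w; induction c; simpl; intros z u w H; case_eqb; simpl in *; try (subst; tauto).
  all: try (destruct H as [H|H]; [apply IHc1 in H | apply IHc2 in H]; tauto).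
  all: try (apply IHc in H; tauto).
  all: try (destruct H as [H|H]; [tauto | apply IHc in H; tauto]).
Qed.

Lemma free_for_notfree (c z : form) (u : nat) : ~ free_in u c -> free_for z u c.
Proof.
  revert z u; induction c; simpl; intros z u H; auto;
    try (split; [apply IHc1 | apply IHc2]; tauto); try (apply IHc; tauto);
    (destruct (Nat.eq_dec u n); [left; auto | right; split; [tauto | apply IHc; tauto]]).
Qed.

Lemma free_for_notbound (c z : form) (u : nat) :
  (forall w, free_in w z -> ~ bound_in w c) -> free_for z u c.
Proof.
  revert z u; induction c; simpl; intros z u H; auto;
    try (split; [apply IHc1 | apply IHc2]; intros w Hw; specialize (H w Hw); tauto);
    try (apply IHc; intros w Hw; specialize (H w Hw); tauto);
    right; (split; [intros _ Hf; apply (H n Hf); auto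
                   | apply IHc; intros w Hw; specialize (H w Hw); tauto]).
Qed.

Lemma size_rename (c : form) (x x' : nat) : size (subst c (FVar x') x) = size c.
Proof. induction c; simpl; case_eqb; simpl; auto. Qed.

Lemma rename_compose (c z : form) (x x' : nat) :
  ~ free_in x' c -> ~ bound_in x' c -> subst (subst c (FVar x') x) z x' = subst c z x.
Proof.
  revert x x' z; induction c; simpl; intros x x' z Hf Hb; case_eqb; simpl; case_eqb; subst;
    try tauto;
    try (rewrite IHc1, IHc2 by tauto; reflexivity);
    try (rewrite IHc by tauto; reflexivity);
    try (rewrite subst_notfree by tauto; reflexivity).
Qed.

Lemma free_rename_back (c : form) (u v : nat) :
  ~ free_in v c -> free_in v (subst c (FVar v) u) -> free_in u c.
Proof.
  revert u v; induction c; simpl; intros u v Hf H; case_eqb; simpl in *; subst; try tauto.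
  all: try (destruct H as [H|H]; [left; eapply IHc1 | right; eapply IHc2]; eauto).
  all: try (eapply IHc; eauto).
  all: split; [auto | eapply IHc; [| apply H]; tauto].
Qed.

Lemma free_for_rename (c z : form) (x x' : nat) :
  free_for z x c -> ~ free_in x' c -> ~ bound_in x' c ->
  free_for z x' (subst c (FVar x') x).
Proof.
  revert x x' z; induction c; simpl; intros x x' z Hff Hf Hb; case_eqb; simpl; subst;
    try tauto; try (split; [apply IHc1 | apply IHc2]; tauto); try (apply IHc; tauto).
  all: right.
  all: try (split; [tauto | apply free_for_notfree; tauto]).
  all: destruct Hff as [Hff | [H1 H2]]; [tauto |]; split; [| apply IHc; tauto].
  all: intro Hx; apply H1; eapply free_rename_back; [| apply Hx]; tauto.
Qed.

(* abstraction B f c: c arises from f by replacing occurrences of subformulas by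
   variables, where B lists the binders above the current position. *)
Inductive abstraction : list nat -> form -> form -> Prop :=
| abstr_cut B f v :
    (forall w, free_in w f -> ~ In w B) -> ~ In v B -> abstraction B f (FVar v)
| abstr_atom B f : atomic f -> abstraction B f f
| abstr_and B a b a' b' :
    abstraction B a a' -> abstraction B b b' -> abstraction B (FAnd a b) (FAnd a' b')
| abstr_or B a b a' b' :
    abstraction B a a' -> abstraction B b b' -> abstraction B (FOr a b) (FOr a' b')
| abstr_dia B a a' : abstraction B a a' -> abstraction B (FDia a) (FDia a')
| abstr_box B a a' : abstraction B a a' -> abstraction B (FBox a) (FBox a')
| abstr_mu B y a a' : abstraction (y :: B) a a' -> abstraction B (FMu y a) (FMu y a')
| abstr_nu B y a a' : abstraction (y :: B) a a' -> abstraction B (FNu y a) (FNu y a').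

Lemma abstraction_refl (B : list nat) (f : form) : abstraction B f f.
Proof.
  revert B; induction f; intros B;
    solve [apply abstr_atom; exact I | constructor; auto].
Qed.

Lemma abstraction_weaken (B B' : list nat) (f c : form) :
  abstraction B f c -> incl B' B -> abstraction B' f c.
Proof.
  intros H; revert B'; induction H; intros B' Hi; try (constructor; auto; fail).
  - apply abstr_cut; [intros w Hw Hin; apply (H w Hw); auto | intro Hin; apply H0; auto].
  - apply abstr_mu, IHabstraction; intros w [Hw|Hw]; [left | right]; auto.
  - apply abstr_nu, IHabstraction; intros w [Hw|Hw]; [left | right]; auto.
Qed.

Lemma abstraction_free (B : list nat) (f c : form) (w : nat) :
  abstraction B f c -> free_in w c -> free_in w f \/ ~ In w B.
Proof.
  intros H; revert w; induction H; simpl; intros w Hw; try tauto.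
  - subst; tauto.
  - destruct Hw as [Hw|Hw]; [apply IHabstraction1 in Hw | apply IHabstraction2 in Hw]; tauto.
  - destruct Hw as [Hw|Hw]; [apply IHabstraction1 in Hw | apply IHabstraction2 in Hw]; tauto.
  - apply IHabstraction in Hw; tauto.
  - apply IHabstraction in Hw; tauto.
  - destruct Hw as [Hn Hw]; apply IHabstraction in Hw; simpl in Hw; tauto.
  - destruct Hw as [Hn Hw]; apply IHabstraction in Hw; simpl in Hw; tauto.
Qed.

Fixpoint occ (x : nat) (f : form) : nat :=
  match f with
  | FVar y => if Nat.eqb x y then 1 else 0
  | FTop | FBot | FProp _ | FNProp _ => 0
  | FAnd a b | FOr a b => occ x a + occ x b
  | FDia a | FBox a => occ x a
  | FMu y a | FNu y a => if Nat.eqb x y then 0 else occ x a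
  end.

Lemma occ_zero (x : nat) (f : form) : occ x f = 0 <-> ~ free_in x f.
Proof.
  induction f; simpl; case_eqb; subst; try tauto; try (split; [lia | tauto]);
    try (rewrite Nat.eq_add_0, IHf1, IHf2; tauto); rewrite IHf; tauto.
Qed.

Lemma occ_one_side (z : nat) (a b : form) :
  occ z a + occ z b <= 1 -> free_in z a -> ~ free_in z b.
Proof.
  intros Hocc Ha; apply occ_zero.
  assert (occ z a <> 0) by (rewrite occ_zero; tauto); lia.
Qed.

Lemma occ_subst (g xi : form) (x z : nat) :
  z <> x -> ~ free_in z xi -> occ z (subst g xi x) = occ z g.
Proof.
  intros Hzx Hxi; induction g; simpl; case_eqb; simpl; case_eqb; subst; try tauto; auto.
  apply occ_zero; auto.
Qed.

Fixpoint rename_first (x z : nat) (f : form) : form :=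
  match f with
  | FVar y => if Nat.eqb x y then FVar z else f
  | FAnd a b =>
      if Nat.eqb (occ x a) 0 then FAnd a (rename_first x z b) else FAnd (rename_first x z a) b
  | FOr a b =>
      if Nat.eqb (occ x a) 0 then FOr a (rename_first x z b) else FOr (rename_first x z a) b
  | FDia a => FDia (rename_first x z a)
  | FBox a => FBox (rename_first x z a)
  | FMu y a => if Nat.eqb x y then f else FMu y (rename_first x z a)
  | FNu y a => if Nat.eqb x y then f else FNu y (rename_first x z a)
  | _ => f
  end.

Section RenameFirst.
Variables (x z : nat).
Hypothesis z_neq_x : z <> x.

Lemma occ_rename_first_x (f : form) : occ x (rename_first x z f) = pred (occ x f).
Proof. induction f; simpl; case_eqb; simpl; case_eqb; subst; try tauto; lia. Qed.

Lemma occ_rename_first_z (f : form) : ~ free_in z f -> occ z (rename_first x z f) <= 1.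
Proof.
  rewrite <- occ_zero; induction f; simpl; case_eqb; simpl; case_eqb; subst; try tauto; lia.
Qed.

Lemma rename_first_free_other (f : form) (w : nat) :
  w <> x -> w <> z -> free_in w (rename_first x z f) <-> free_in w f.
Proof.
  intros Hx Hz; induction f; simpl; case_eqb; simpl; subst; try tauto.
Qed.

Lemma rename_first_free_z (f : form) :
  ~ free_in z f -> free_in z (rename_first x z f) -> free_in x f.
Proof.
  induction f; simpl; case_eqb; simpl; subst; try tauto.
  all: rewrite occ_zero in *; tauto.
Qed.

Lemma rename_first_free_x (f : form) : free_in x (rename_first x z f) -> free_in x f.
Proof.
  intros H; apply NNPP; intro Hn; apply (proj1 (occ_zero x (rename_first x z f))); auto.
  rewrite occ_rename_first_x, (proj2 (occ_zero x f) Hn); reflexivity.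
Qed.

Lemma rename_first_free_for (xi f : form) :
  free_for xi x f -> free_for xi x (rename_first x z f).
Proof.
  induction f; simpl; case_eqb; simpl; try tauto.
  all: intros [Hxn | [H1 H2]]; [tauto | right; split; auto].
  all: intro Hx; apply H1, rename_first_free_x, Hx.
Qed.

(* Cutting a subformula of the renamed formula is also a legal cut of the
   original one, since the only variable that changed is x, which is not bound
   above. *)
Lemma rename_first_cut (f : form) (B : list nat) (v : nat) :
  ~ In x B -> ~ free_in z f -> ~ In v B ->
  (forall w, free_in w (rename_first x z f) -> ~ In w B) -> abstraction B f (FVar v).
Proof.
  intros Hx Hz Hv Hcut; apply abstr_cut; auto; intros w Hw.
  destruct (Nat.eq_dec w x) as [-> | Hwx]; auto.
  apply Hcut, rename_first_free_other; auto; intros ->; auto.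
Qed.

Lemma rename_first_abstraction (f c : form) (B : list nat) :
  ~ In x B -> ~ In z B -> ~ free_in z f -> ~ bound_in z f ->
  abstraction B (rename_first x z f) c -> abstraction B f c.
Proof.
  revert B c; induction f; intros B c Hx HzB Hf Hb Habs; simpl in *; case_eqb; subst;
    inversion Habs; subst;
    try (eapply rename_first_cut; eauto; simpl; case_eqb; tauto); try assumption;
    try (simpl in *; contradiction).
  all: try (apply abstr_cut; simpl; [intros w ->|]; assumption).
  all: constructor; try assumption.
  all: first [apply IHf | apply IHf1 | apply IHf2]; auto; try (simpl; tauto).
  all: intros [E | E]; subst; tauto.
Qed.

Section Subst.
Variable xi : form.
Hypothesis z_notfree_xi : ~ free_in z xi.

Lemma rename_first_free_for_z (f : form) :
  free_for xi x f -> ~ free_in z f -> ~ bound_in z f ->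
  free_for xi z (subst (rename_first x z f) xi x).
Proof.
  induction f; simpl; case_eqb; simpl; case_eqb; subst; intros Hff Hf Hb; try tauto.
  all: try (split; [apply free_for_notfree, notfree_subst | apply IHf2]; tauto).
  all: try (split; [apply IHf1 | apply free_for_notfree, notfree_subst]; tauto).
  all: try (apply free_for_notfree; simpl; tauto).
  all: right; split; [| apply IHf; tauto].
  all: intros Hz Hn; apply free_subst_inv in Hz; destruct Hz as [[Hz _] | Hz]; [| tauto].
  all: apply rename_first_free_z in Hz; [| tauto].
  all: destruct Hff as [Hff | [Hff _]]; [congruence | tauto].
Qed.

Lemma rename_first_subst (f : form) :
  ~ free_in z f -> ~ bound_in z f ->
  subst (subst (rename_first x z f) xi x) xi z = subst f xi x.
Proof.
  induction f; simpl; case_eqb; simpl; case_eqb; simpl; case_eqb; subst; intros Hf Hb;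
    try tauto.
  all: f_equal; try (apply IHf || apply subst_notfree); try tauto.
  all: apply notfree_subst; tauto.
Qed.
End Subst.
End RenameFirst.

Section Peel.
Variables (xi : form) (z : nat).

Definition peeled (B : list nat) (g c : form) : Prop :=
  exists c0 e, abstraction B g c0 /\ abstraction [] xi e /\ free_for e z c0 /\
    (free_in z c0 -> forall w, free_in w e -> ~ In w B) /\ subst c0 e z = c.

Lemma peeled_absent (B : list nat) (g c : form) :
  ~ free_in z g -> maxvar c < z -> abstraction B (subst g xi z) c -> peeled B g c.
Proof.
  intros Hg Hc Habs; rewrite subst_notfree in Habs by assumption.
  assert (Hcz : ~ free_in z c) by (intro H; apply free_maxvar in H; lia).
  exists c, xi; repeat split; auto using abstraction_refl, free_for_notfree, subst_notfree;
    tauto.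
Qed.

(* A cut above the occurrence of z swallows it. *)
Lemma peeled_cut (B : list nat) (g : form) (v : nat) :
  ~ In z B -> v < z -> (forall w, free_in w (subst g xi z) -> ~ In w B) -> ~ In v B ->
  peeled B g (FVar v).
Proof.
  intros HzB Hv Hcut HvB; exists (FVar v), xi; simpl; repeat split; auto using abstraction_refl.
  - apply abstr_cut; auto; intros w Hw.
    destruct (Nat.eq_dec w z) as [-> | Hwz]; auto; apply Hcut, free_subst_keep; auto.
  - lia.
  - case_eqb; [lia | reflexivity].
Qed.

(* Splitting is compatible with the connectives: for a binary connective z
   occurs on one side only, the other side being copied unchanged. *)
Lemma peeled_left (K : form -> form -> form) (B : list nat) (a b a' b' : form) :
  K = FAnd \/ K = FOr -> peeled B a a' -> ~ free_in z b ->
  abstraction B b b' -> maxvar b' < z -> peeled B (K a b) (K a' b').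
Proof.
  intros HK (c0 & e & Hc0 & He & Hff & Hcap & Heq) Hb Hbb Hmax.
  assert (Hz : ~ free_in z b') by (intro H; apply free_maxvar in H; lia).
  exists (K c0 b'), e; destruct HK as [-> | ->]; simpl;
    (split; [constructor; auto |]);
    repeat split; auto using free_for_notfree; try tauto;
    rewrite (subst_notfree b'), Heq; auto.
Qed.

Lemma peeled_right (K : form -> form -> form) (B : list nat) (a b a' b' : form) :
  K = FAnd \/ K = FOr -> peeled B b b' -> ~ free_in z a ->
  abstraction B a a' -> maxvar a' < z -> peeled B (K a b) (K a' b').
Proof.
  intros HK (c0 & e & Hc0 & He & Hff & Hcap & Heq) Ha Haa Hmax.
  assert (Hz : ~ free_in z a') by (intro H; apply free_maxvar in H; lia).
  exists (K a' c0), e; destruct HK as [-> | ->]; simpl;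
    (split; [constructor; auto |]);
    repeat split; auto using free_for_notfree; try tauto;
    rewrite (subst_notfree a'), Heq; auto.
Qed.

Lemma peeled_unary (K : form -> form) (B : list nat) (a a' : form) :
  K = FDia \/ K = FBox -> peeled B a a' -> peeled B (K a) (K a').
Proof.
  intros HK (c0 & e & Hc0 & He & Hff & Hcap & Heq).
  exists (K c0), e; destruct HK as [-> | ->]; simpl; repeat split; try constructor; auto;
    congruence.
Qed.

(* Under a binder y the capture condition for e is exactly what free_for needs. *)
Lemma peeled_binder (K : nat -> form -> form) (B : list nat) (y : nat) (a a' : form) :
  K = FMu \/ K = FNu -> z <> y -> peeled (y :: B) a a' -> peeled B (K y a) (K y a').
Proof.
  intros HK Hzy (c0 & e & Hc0 & He & Hff & Hcap & Heq).
  exists (K y c0), e; destruct HK as [-> | ->]; simpl; case_eqb; try congruence;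
    (split; [constructor; auto |]); (split; [auto |]);
    (split; [right; split; auto; intros Hz Hy; apply (Hcap Hz y Hy); simpl; auto |]);
    (split; [intros [_ Hz] w Hw Hin; apply (Hcap Hz w Hw); simpl; auto | congruence]).
Qed.

Lemma peeled_here (B : list nat) (c : form) :
  (forall w, free_in w xi -> ~ In w B) -> abstraction B xi c -> peeled B (FVar z) c.
Proof.
  intros Hxi Habs; exists (FVar z), c; simpl; rewrite Nat.eqb_refl.
  repeat split; auto using abstraction_refl.
  - eapply abstraction_weaken; eauto; intros w [].
  - intros _ w Hw; destruct (abstraction_free _ _ _ w Habs Hw); auto.
Qed.

Lemma peel_occurrence (g : form) : forall (B : list nat) (c : form),
  occ z g <= 1 -> free_for xi z g ->
  (free_in z g -> ~ In z B /\ forall w, free_in w xi -> ~ In w B) ->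
  maxvar c < z -> abstraction B (subst g xi z) c -> peeled B g c.
Proof.
  induction g; intros B c Hocc Hff Hz Hc Habs;
    match goal with |- peeled _ ?g _ =>
      destruct (classic (free_in z g)) as [Hfree | Hfree]; [| now apply peeled_absent] end;
    specialize (Hz Hfree); simpl in Hfree, Hocc, Hff, Habs.
  all: try contradiction.
  1: subst n; rewrite Nat.eqb_refl in Habs; apply peeled_here; tauto.
  all: try (destruct Hfree as [Hzn Hfree]; case_eqb; [congruence |];
            destruct Hff as [Hff | [Hcap Hff]]; [congruence |]).
  all: inversion Habs; subst;
    [apply peeled_cut; simpl in Hc; try lia; try tauto;
       simpl; case_eqb; try congruence; assumption
    | simpl in *; contradiction |].
  all: simpl in Hc.
  1, 2: destruct Hfree as [Hfree | Hfree];
    [ pose proof (occ_one_side _ _ _ Hocc Hfree) as Hnot;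
      rewrite (subst_notfree g2) in * by assumption;
      apply peeled_left; try tauto; try lia; apply IHg1; try tauto; lia
    | rewrite Nat.add_comm in Hocc; pose proof (occ_one_side _ _ _ Hocc Hfree) as Hnot;
      rewrite (subst_notfree g1) in * by assumption;
      apply peeled_right; try tauto; try lia; apply IHg2; try tauto; lia ].
  1, 2: apply peeled_unary; [tauto | apply IHg; auto].
  all: apply peeled_binder; auto; apply IHg; auto; try lia.
  all: intros _; split; [intros [E | E]; [congruence | tauto] |].
  all: intros w Hw [E | E]; [subst; exact (Hcap Hfree Hw) | exact (proj2 Hz w Hw E)].
Qed.
End Peel.

Lemma AH_var (e : fp) (n v : nat) : AH e n (FVar v).
Proof. apply (AH_mono e 0); [lia | apply AH_atom; exact I]. Qed.

Definition abstraction_closed (e : fp) (n : nat) (f : form) : Prop :=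
  forall c, abstraction [] f c -> AH e n c.

(* Induction on the number of
   free occurrences of x in chi: the leftmost one is renamed to a fresh z, so
   that chi[xi/x] = (chi'[xi/x])[xi/z] with z occurring once, and every
   abstraction of it splits as c0[e/z] by peel_occurrence. *)
Lemma abstraction_closed_subst (e : fp) (n : nat) (xi : form) (x : nat) :
  abstraction_closed e n xi -> forall k chi, occ x chi = k ->
  abstraction_closed e n chi -> free_for xi x chi -> abstraction_closed e n (subst chi xi x).
Proof.
  intros Hxi k; induction k as [| k IHk]; intros chi Hk Hchi Hff c Habs.
  { rewrite subst_notfree in Habs by (apply occ_zero; auto); auto. }
  set (z := S (max x (max (maxvar chi) (max (maxvar xi) (maxvar c))))).
  assert (Hzx : z <> x) by lia.
  assert (Hzf : ~ free_in z chi) by (intro H; apply free_maxvar in H; lia).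
  assert (Hzb : ~ bound_in z chi) by (intro H; apply bound_maxvar in H; lia).
  assert (Hzxi : ~ free_in z xi) by (intro H; apply free_maxvar in H; lia).
  set (d := rename_first x z chi).
  assert (IHd : abstraction_closed e n (subst d xi x)).
  { apply IHk.
    - unfold d; rewrite occ_rename_first_x, Hk by assumption; reflexivity.
    - intros c' Hc'; apply Hchi; eapply rename_first_abstraction; eauto.
    - apply rename_first_free_for; assumption. }
  rewrite <- (rename_first_subst x z Hzx xi Hzxi chi Hzf Hzb) in Habs; fold d in Habs.
  destruct (peel_occurrence xi z (subst d xi x) [] c)
    as (c0 & plug & Hc0 & Hplug & Hfor & _ & Heq); auto.
  - rewrite occ_subst by assumption; apply occ_rename_first_z; assumption.
  - apply rename_first_free_for_z; assumption.
  - lia.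
  - rewrite <- Heq; apply AH_subst; auto.
Qed.

Theorem AH_abstraction (e : fp) (n : nat) (f : form) :
  AH e n f -> abstraction_closed e n f.
Proof.
  induction 1 as [e f Hat | e n a b _ IHa _ IHb | e n a b _ IHa _ IHb | e n a _ IHa
                 | e n a _ IHa | e n x chi _ IH | e n x chi xi _ IHchi _ IHxi Hff
                 | e e' n f _ IH];
    intros c Habs.
  - inversion Habs; subst; [apply AH_var | apply AH_atom; assumption | contradiction ..].
  - inversion Habs; subst; [apply AH_var | contradiction | apply AH_and; auto].
  - inversion Habs; subst; [apply AH_var | contradiction | apply AH_or; auto].
  - inversion Habs; subst; [apply AH_var | contradiction | apply AH_dia; auto].
  - inversion Habs; subst; [apply AH_var | contradiction | apply AH_box; auto].
  - destruct e; simpl in Habs; inversion Habs; subst; try apply AH_var; try contradiction.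
    all: match goal with |- AH ?e _ _ => apply (AH_fix e n x) end.
    all: apply IH; eapply abstraction_weaken; eauto; intros w [].
  - exact (abstraction_closed_subst e n xi x IHxi _ chi eq_refl IHchi Hff c Habs).
  - apply (AH_up e e'), IH, Habs.
Qed.

Fixpoint replace_free (xi : form) (x' : nat) (B : list nat) (f : form) {struct f} : form :=
  if excluded_middle_informative (f = xi /\ forall w, free_in w xi -> ~ In w B)
  then FVar x'
  else match f with
       | FAnd a b => FAnd (replace_free xi x' B a) (replace_free xi x' B b)
       | FOr a b => FOr (replace_free xi x' B a) (replace_free xi x' B b)
       | FDia a => FDia (replace_free xi x' B a)
       | FBox a => FBox (replace_free xi x' B a)
       | FMu y a => FMu y (replace_free xi x' (y :: B) a)
       | FNu y a => FNu y (replace_free xi x' (y :: B) a)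
       | _ => f
       end.

Ltac case_replace := match goal with
  | |- context [excluded_middle_informative ?P] =>
      destruct (excluded_middle_informative P) as [[Heq Hxi] | Hkeep]
  | H : context [excluded_middle_informative ?P] |- _ =>
      destruct (excluded_middle_informative P) as [[Heq Hxi] | Hkeep]
  end.

Section ReplaceFree.
Variables (xi : form) (x' : nat).

Lemma replace_free_abstraction (f : form) (B : list nat) :
  ~ In x' B -> ~ bound_in x' f -> abstraction B f (replace_free xi x' B f).
Proof.
  revert B; induction f; intros B HB Hb; simpl; case_replace;
    try (apply abstr_cut; [subst; auto | auto]; fail);
    try (apply abstr_atom; exact I).
  all: simpl in Hb; constructor.
  all: try (apply IHf1; tauto); try (apply IHf2; tauto); try (apply IHf; tauto).
  all: apply IHf; [intros [E | E]; [subst; tauto | tauto] | tauto].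
Qed.

Lemma replace_free_size (f : form) (B : list nat) :
  size (replace_free xi x' B f) <= size f.
Proof.
  assert (Hpos : forall g, 1 <= size g) by (destruct g; simpl; lia).
  revert B; induction f; intros B; simpl; case_replace; simpl;
    try (specialize (Hpos xi); lia).
  all: try (specialize (IHf1 B); specialize (IHf2 B); lia).
  all: try (specialize (IHf B); lia).
  all: match goal with |- context [?m :: ?B0] => specialize (IHf (m :: B0)); lia end.
Qed.

Lemma replace_free_subst (f : form) (B : list nat) :
  ~ bound_in x' f -> ~ free_in x' xi ->
  subst (replace_free xi x' B f) xi x' = subst f xi x'.
Proof.
  revert B; induction f; intros B Hb Hx; cbn [replace_free]; case_replace.
  all: try (transitivity xi; [simpl; rewrite Nat.eqb_refl; reflexivity |];
            rewrite <- Heq; symmetry; apply subst_notfree; rewrite Heq; assumption).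
  all: simpl in Hb |- *; auto.
  all: try (rewrite IHf1, IHf2 by tauto; auto; fail).
  all: try (rewrite IHf by tauto; auto; fail).
  all: case_eqb; try tauto; rewrite IHf by tauto; auto.
Qed.

Lemma replace_free_free (f : form) (B : list nat) (w : nat) :
  free_in w (replace_free xi x' B f) -> free_in w f \/ w = x'.
Proof.
  revert B; induction f; intros B H; simpl in H; revert H; case_replace; simpl; intro H; auto.
  all: try (destruct H as [H|H]; [apply IHf1 in H | apply IHf2 in H]; tauto).
  all: try (apply IHf in H; tauto).
  all: destruct H as [H1 H]; apply IHf in H; tauto.
Qed.

Lemma replace_free_free_x' (f : form) (B : list nat) :
  free_in x' (replace_free xi x' B f) ->
  free_in x' f \/ (forall w, free_in w xi -> ~ In w B).
Proof.
  revert B; induction f; intros B H; simpl in H; revert H; case_replace; simpl; intro H; auto.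
  all: try (destruct H as [H|H]; [apply IHf1 in H | apply IHf2 in H]; tauto).
  all: try (apply IHf in H; tauto).
  all: destruct H as [H1 H]; apply IHf in H; destruct H as [H | H]; [left; auto |].
  all: right; intros w Hw Hin; apply (H w Hw); simpl; auto.
Qed.

Lemma replace_free_bound (f : form) (B : list nat) (w : nat) :
  bound_in w (replace_free xi x' B f) -> bound_in w f.
Proof.
  revert B; induction f; intros B H; simpl in H; revert H; case_replace; simpl; intro H;
    try tauto.
  all: try (destruct H as [H|H]; [apply IHf1 in H | apply IHf2 in H]; tauto).
  all: try (apply IHf in H; tauto).
  all: destruct H as [H|H]; [auto | apply IHf in H; tauto].
Qed.

(* xi stays free for x' since x' only appears where xi was free. *)
Lemma replace_free_free_for (f : form) (B : list nat) :
  free_for xi x' f -> ~ bound_in x' f -> free_for xi x' (replace_free xi x' B f).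
Proof.
  revert B; induction f; intros B Hff Hb; simpl; case_replace; simpl; auto; simpl in Hff, Hb;
    try (split; [apply IHf1 | apply IHf2]; tauto); try (apply IHf; tauto).
  all: destruct Hff as [Hff | [H1 H2]]; [tauto |]; right; split; [| apply IHf; tauto].
  all: intro Hx; apply replace_free_free_x' in Hx; destruct Hx as [Hx | Hx]; auto.
  all: intro Hn'; apply (Hx n Hn'); simpl; auto.
Qed.

End ReplaceFree.

Fixpoint occurs_free (xi : form) (B : list nat) (f : form) : Prop :=
  (f = xi /\ forall w, free_in w xi -> ~ In w B) \/
  match f with
  | FAnd a b | FOr a b => occurs_free xi B a \/ occurs_free xi B b
  | FDia a | FBox a => occurs_free xi B a
  | FMu y a | FNu y a => occurs_free xi (y :: B) a
  | _ => False
  end.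

Lemma occurs_free_here (xi : form) (B : list nat) :
  (forall w, free_in w xi -> ~ In w B) -> occurs_free xi B xi.
Proof. destruct xi; simpl; left; auto. Qed.

Lemma subst_occurs_free (xi c : form) (y : nat) (B : list nat) :
  free_in y c -> free_for xi y c -> (forall w, free_in w xi -> ~ In w B) ->
  occurs_free xi B (subst c xi y).
Proof.
  revert B; induction c; intros B Hf Hff HB; simpl in Hf, Hff |- *; case_eqb; try tauto.
  1: apply occurs_free_here; assumption.
  all: simpl; right.
  all: try (destruct Hf; [left; apply IHc1 | right; apply IHc2]; tauto).
  all: try (apply IHc; tauto).
  all: destruct Hf as [Hyn Hf]; destruct Hff as [Hff | [H1 H2]]; [congruence |].
  all: apply IHc; auto; intros w Hw [E | E]; [subst; exact (H1 Hf Hw) | exact (HB w Hw E)].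
Qed.

Lemma free_subformula_occurs_free (xi g : form) :
  free_subformula xi g -> occurs_free xi [] g.
Proof.
  intros (c & y & -> & Hf & Hff); apply subst_occurs_free; auto.
Qed.

Section NoOccurrence.
Variables (xi : form) (x' : nat).
Hypotheses (xi_large : 1 < size xi) (x'_notfree_xi : ~ free_in x' xi).

Lemma replace_free_changed (f : form) (B : list nat) :
  ~ bound_in x' f -> replace_free xi x' B f = f \/ free_in x' (replace_free xi x' B f).
Proof.
  revert B; induction f; intros B Hb; cbn [replace_free]; case_replace; simpl in Hb |- *;
    auto.
  all: try (destruct (IHf1 B ltac:(tauto)) as [E1 | H1]; [| tauto];
            destruct (IHf2 B ltac:(tauto)) as [E2 | H2]; [left; congruence | tauto]).
  all: try (destruct (IHf B ltac:(tauto)) as [E | H]; [left; congruence | tauto]).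
  all: destruct (IHf (n :: B) ltac:(tauto)) as [E | H]; [left; congruence | right; split; auto].
Qed.

(* The result of replace_free is not itself a free occurrence of xi: otherwise
   it is unchanged (x' does not occur in xi), so f = xi would have been replaced
   by x', which differs from xi since |xi| > 1. *)
Lemma replace_free_top (f : form) (B : list nat) :
  ~ bound_in x' f -> ~ (replace_free xi x' B f = xi /\ forall w, free_in w xi -> ~ In w B).
Proof.
  intros Hb [Hr HB].
  destruct (replace_free_changed f B Hb) as [Hsame | Hx']; [| rewrite Hr in Hx'; tauto].
  rewrite Hsame in Hr; subst xi.
  destruct f; cbn [replace_free] in Hsame; case_replace; try tauto;
    rewrite <- Hsame in xi_large; simpl in xi_large; lia.
Qed.

Lemma replace_free_no_occurrence (f : form) (B : list nat) :
  ~ bound_in x' f -> ~ occurs_free xi B (replace_free xi x' B f).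
Proof.
  revert B; induction f; intros B Hb Hocc;
    pose proof (replace_free_top _ B Hb) as Htop;
    cbn [replace_free] in Hocc, Htop; case_replace; simpl in Hocc, Hb;
    destruct Hocc as [Hocc | Hocc]; try tauto.
  all: try (destruct Hocc as [Hocc | Hocc]; [revert Hocc; apply IHf1 | revert Hocc; apply IHf2];
            tauto).
  all: revert Hocc; apply IHf; tauto.
Qed.
End NoOccurrence.

Lemma ad_le (e : fp) (n : nat) (f : form) : AH e n f -> ad e f <= n.
Proof. intros H; apply (proj2 (ad_spec e f)), H. Qed.

(* The construction keeps tidiness: its bound variables are those of chi, and
   its free variables are those of chi[xi/x] apart from the fresh x'. *)
Lemma replace_free_rename_tidy (xi chi : form) (x x' : nat) :
  ~ bound_in x' chi -> tidy (subst chi xi x) ->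
  tidy (replace_free xi x' [] (subst chi (FVar x') x)).
Proof.
  intros Hb' Htidy w [Hf Hb].
  apply replace_free_bound, bound_subst_inv in Hb; destruct Hb as [Hb | []].
  apply replace_free_free in Hf; destruct Hf as [Hf | ->]; [| tauto].
  apply free_subst_inv in Hf; destruct Hf as [[Hf Hwx] | Hf]; [| simpl in Hf; subst; tauto].
  apply (Htidy w); split; [apply free_subst_keep | apply bound_subst_keep]; auto.
Qed.

Lemma ad_abstraction_rename (e : fp) (chi c : form) (x x' : nat) :
  ~ bound_in x' chi -> abstraction [] (subst chi (FVar x') x) c -> ad e c <= ad e chi.
Proof.
  intros Hb Habs; apply ad_le, (AH_abstraction e (ad e chi) (subst chi (FVar x') x)); auto.
  apply AH_subst; [apply ad_spec | apply AH_var |].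
  apply free_for_notbound; simpl; intros w ->; auto.
Qed.

Theorem mainTheorem10 (xi chi : form) (x : nat) :
  free_for xi x chi ->
  free_in x chi ->
  size xi > 1 ->
  tidy (subst chi xi x) ->
  exists (chi' : form) (x' : nat),
    tidy chi' /\
    free_for xi x' chi' /\
    subst chi' xi x' = subst chi xi x /\
    size chi' <= size chi /\
    (forall e : fp, ad e chi' <= ad e chi) /\
    ~ free_subformula xi chi'.
Proof.
  (* x' is fresh; chi' replaces the free copies of xi in chi[x'/x] by x'. *)
  intros Hff _ Hsize Htidy.
  set (x' := S (max (maxvar chi) (maxvar xi))).
  assert (Hfchi : ~ free_in x' chi) by (intro H; apply free_maxvar in H; lia).
  assert (Hbchi : ~ bound_in x' chi) by (intro H; apply bound_maxvar in H; lia).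
  assert (Hfxi : ~ free_in x' xi) by (intro H; apply free_maxvar in H; lia).
  set (psi := subst chi (FVar x') x).
  assert (Hbpsi : ~ bound_in x' psi) by (intro H; apply bound_subst_inv in H; simpl in H; tauto).
  exists (replace_free xi x' [] psi), x'; repeat split.
  - apply replace_free_rename_tidy; auto.
  - apply replace_free_free_for; auto; apply free_for_rename; auto.
  - rewrite replace_free_subst by auto; apply rename_compose; auto.
  - rewrite <- (size_rename chi x x'); apply replace_free_size.
  - intros e; apply (ad_abstraction_rename e chi _ x x'); auto.
    apply replace_free_abstraction; simpl; auto.
  - intros Hsub; apply free_subformula_occurs_free in Hsub; revert Hsub.
    apply replace_free_no_occurrence; auto.
Qed.
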